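(* Let $G=(V,E)$ be a graph of maximum degree $\Delta$ and let $\mathscr{S}$ be any block system for $G$. Then $\mu^+(\mathscr{S})\le\Delta$. If in addition $G$ is $\Delta$-regular, then $\frac{\Delta}{2}\le\mu^+(\mathscr{S})\le\Delta$.
   Context: Potts configurations on $G$: $\sigma\in\Omega=[q]^V$, $q$ a positive integer. A block system for $G$ is a collection $\mathscr{S}$ of subsets of $V$ whose union is $V$. For $S\subseteq V$, $\partial S$ is the set of vertices of $V\setminus S$ with a neighbour in $S$. For $X\in\Omega$ and $c\in[q]^S$, $X^{(S,c)}$ equals $c$ on $S$ and $X$ off $S$; $\mu_{X,S}(c)$ is the number of monochromatic edges (edges with both endpoints the same colour) of $X^{(S,c)}$ incident with at least one vertex of $S$. A colour used by $c$ is free with respect to $X,S$ if it does not occur among $\{X(u):u\in\partial S\}$; $f(X,S,c)$ is the number of free colours used by $c$. $\mu^+_{X,S,f}=\max\{\mu_{X,S}(c)/(|S|-f): c\in[q]^S,\ f(X,S,c)=f\}$ (empty maximum $=0$), and $\mu^+(\mathscr{S})=\max_{S\in\mathscr{S}}\max_{X\in\Omega}\max_{f\in\{0,\dots,|S|-1\}}\mu^+_{X,S,f}$. *)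

From HB Require Import structures.
From mathcomp Require Import all_boot all_order all_algebra.
Set Implicit Arguments. Unset Strict Implicit. Unset Printing Implicit Defensive.
Import Order.TTheory GRing.Theory Num.Theory.

Section PottsBlocks.
Variables (V : finType) (e : rel V) (q : nat).

(* A simple graph on V is given by a symmetric irreflexive relation e. *)
Definition deg (v : V) : nat := #|[set u | e v u]|.
Definition maxdeg : nat := \max_(v : V) deg v.

Definition edgeset : {set {set V}} :=
  [set A : {set V} | [exists u, exists v, (A == [set u; v]) && e u v]].

Definition bdry (S : {set V}) : {set V} :=
  [set v | (v \notin S) && [exists u in S, e u v]].

(* X^{(S,c)}: c on S, X off S (c : [q]^V, only its restriction to S is used) *)
Definition recolour (X c : {ffun V -> 'I_q}) (S : {set V}) : {ffun V -> 'I_q} :=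
  [ffun v => if v \in S then c v else X v].

Definition mu (X : {ffun V -> 'I_q}) (S : {set V}) (c : {ffun V -> 'I_q}) : nat :=
  #|[set A in edgeset | [exists u, exists v,
       [&& A == [set u; v], e u v,
           recolour X c S u == recolour X c S v & (u \in S) || (v \in S)]]]|.

Definition nfree (X : {ffun V -> 'I_q}) (S : {set V}) (c : {ffun V -> 'I_q}) : nat :=
  #|[set k : 'I_q | [exists v in S, c v == k] && ~~ [exists u in bdry S, X u == k]]|.

(* mu^+_{X,S,f}; empty maximum is 0 (all values are >= 0) *)
Definition muplusXSf (X : {ffun V -> 'I_q}) (S : {set V}) (f : nat) : rat :=
  \big[Num.max/0%R]_(c : {ffun V -> 'I_q} | nfree X S c == f)
     ((mu X S c)%:R / (#|S| - f)%N%:R)%R.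

Definition muplus (Ssys : {set {set V}}) : rat :=
  \big[Num.max/0%R]_(S in Ssys) \big[Num.max/0%R]_(X : {ffun V -> 'I_q})
     \big[Num.max/0%R]_(f < #|S|) muplusXSf X S f.

End PottsBlocks.

Definition block_system (V : finType) (Ssys : {set {set V}}) : Prop :=
  \bigcup_(S in Ssys) S = [set: V].

From HB Require Import structures.
From mathcomp Require Import all_boot all_order all_algebra.
Import Order.TTheory GRing.Theory Num.Theory.
Set Implicit Arguments. Unset Strict Implicit.

(* Upper bound.  Fix S, X and c with f free colours.  Choosing one vertex of S
   of each free colour gives a set R of f "representatives".  Every
   monochromatic edge of X^(S,c) meeting S has an endpoint in S \ R: an edge at
   a representative u either leaves S (impossible, c(u) does not occur on the
   boundary) or joins u to a vertex of S of the same colour, which is then not a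
   representative.  Hence mu_{X,S}(c) <= Delta * |S \ R| = Delta * (|S| - f).

   Lower bound.  Colour everything with a single colour k.  Then every edge is
   monochromatic, so double counting gives Delta |S| <= 2 mu, and at most one
   colour is free, with f < |S| as soon as S contains a vertex of positive
   degree; so mu/(|S| - f) >= mu/|S| >= Delta/2. *)

Lemma card_bigcup_le (I T : finType) (P : {pred I}) (F : I -> {set T}) :
  (#|\bigcup_(i | P i) F i| <= \sum_(i | P i) #|F i|)%N.
Proof.
elim/big_ind2: _ => [|A1 n1 A2 n2 le1 le2|//]; first by rewrite cards0.
by apply: leq_trans (leq_card_setU _ _) _; apply: leq_add.
Qed.

Lemma sum_incidences_le (T : finType) (S : {set T}) (M : {set {set T}}) :
  (\sum_(v in S) #|[set A in M | v \in A]| <= \sum_(A in M) #|A|)%N.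
Proof.
have incE v : #|[set A in M | v \in A]| = \sum_(A in M) (v \in A : nat).
  by rewrite -sum1dep_card big_mkcondr /=; apply: eq_big => [A|A _]; rewrite ?inE.
rewrite (eq_bigr _ (fun v _ => incE v)) exchange_big /=.
apply: leq_sum => A _; rewrite -big_mkcondr /= sum1dep_card.
by apply: subset_leq_card; apply/subsetP => v; rewrite inE => /andP[].
Qed.

Section BoundedDegree.
Variables (V : finType) (e : rel V).
Hypotheses (e_sym : symmetric e) (e_irr : irreflexive e).

Lemma deg_le_maxdeg (v : V) : (deg e v <= maxdeg e)%N.
Proof. exact: leq_bigmax. Qed.

Definition edges_at (w : V) : {set {set V}} := [set [set w; u] | u in [set u | e w u]].

Lemma edge_in_edges_at (w u : V) : e w u -> [set w; u] \in edges_at w.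
Proof. by move=> ewu; apply/imsetP; exists u; rewrite ?inE. Qed.

(* Since G has no loops, the edges at w are in bijection with its neighbours. *)
Lemma card_edges_at (w : V) : #|edges_at w| = deg e w.
Proof.
rewrite card_in_imset // => u u'; rewrite !inE => ewu ewu' eq_edges.
have : u \in [set w; u'] by rewrite -eq_edges !inE eqxx orbT.
rewrite !inE => /orP[/eqP uw|/eqP //].
by move: ewu; rewrite uw e_irr.
Qed.

Section FreeColourRepresentatives.
Variables (q : nat) (X c : {ffun V -> 'I_q}) (S : {set V}).

Definition free_colours : {set 'I_q} :=
  [set k : 'I_q | [exists v in S, c v == k] && ~~ [exists u in bdry e S, X u == k]].

Definition free_reps : {set V} :=
  [set v in S | (c v \in free_colours) && ([pick w in S | c w == c v] == Some v)].

Lemma free_reps_sub : free_reps \subset S.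
Proof. by apply/subsetP => v; rewrite inE => /andP[]. Qed.

Lemma free_reps_inj : {in free_reps &, injective c}.
Proof.
move=> v w; rewrite !inE => /and3P[_ _ /eqP pick_v] /and3P[_ _ /eqP pick_w] cvw.
by move: pick_v; rewrite cvw pick_w => -[].
Qed.

Lemma free_reps_colour_free (v : V) :
  v \in free_reps -> ~~ [exists u in bdry e S, X u == c v].
Proof. by rewrite !inE => /and3P[_ /andP[]]. Qed.

Lemma card_free_reps : #|free_reps| = nfree e X S c.
Proof.
rewrite -(card_in_imset free_reps_inj); apply: (@eq_card _ _ free_colours) => k.
apply/imsetP/idP => [[v] | free_k]; first by rewrite inE => /and3P[_ ? _] ->.
have := free_k; rewrite inE => /andP[/existsP[v0 /andP[v0S /eqP cv0]] _].
have := erefl [pick w in S | c w == k].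
case: {2}[pick w in S | c w == k] / pickP => [w /andP[wS /eqP cw] pick_w | /(_ v0)].
  exists w; last by rewrite cw.
  by rewrite inE wS cw free_k; apply/eqP.
by rewrite v0S cv0 eqxx.
Qed.

Lemma mono_edge_at_nonrep (u v : V) : e u v -> u \in S ->
  recolour X c S u = recolour X c S v ->
  [set u; v] \in \bigcup_(w in S :\: free_reps) edges_at w.
Proof.
move=> euv uS; rewrite /recolour !ffunE uS.
have [uR | uNR] := boolP (u \in free_reps); last first.
  move=> _; apply/bigcupP; exists u; first by rewrite in_setD uNR uS.
  exact: edge_in_edges_at.
case: ifP => vS cuv.
  have vNR : v \notin free_reps.
    apply/negP => vR; have vu := free_reps_inj uR vR cuv.
    by move: euv; rewrite vu e_irr.
  rewrite setUC; apply/bigcupP; exists v; first by rewrite in_setD vNR vS.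
  by rewrite edge_in_edges_at // e_sym.
case/negP: (free_reps_colour_free uR); apply/existsP; exists v.
rewrite cuv eqxx andbT inE vS /=; apply/existsP; exists u.
by rewrite uS.
Qed.

Lemma mu_le_maxdeg : (mu e X S c <= maxdeg e * (#|S| - nfree e X S c))%N.
Proof.
have card_nonreps : #|S :\: free_reps| = (#|S| - nfree e X S c)%N.
  by rewrite cardsD (setIidPr free_reps_sub) card_free_reps.
have mono_sub : [set A in edgeset e | [exists u, exists v,
       [&& A == [set u; v], e u v, recolour X c S u == recolour X c S v
         & (u \in S) || (v \in S)]]]
    \subset \bigcup_(w in S :\: free_reps) edges_at w.
  apply/subsetP => A; rewrite inE => /andP[_].
  move=> /existsP[u /existsP[v /and4P[/eqP-> euv /eqP cuv /orP[uS|vS]]]].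
    exact: mono_edge_at_nonrep.
  by rewrite setUC; apply: mono_edge_at_nonrep; rewrite // e_sym.
apply: leq_trans (subset_leq_card mono_sub) _.
apply: leq_trans (card_bigcup_le _ _) _.
rewrite -card_nonreps mulnC -sum_nat_const; apply: leq_sum => w _.
by rewrite card_edges_at deg_le_maxdeg.
Qed.

End FreeColourRepresentatives.

Section ConstantColouring.
Variables (q : nat) (k : 'I_q) (S : {set V}).

Let Xk : {ffun V -> 'I_q} := [ffun=> k].

Let Xk_const (z : V) : Xk z = k. Proof. by rewrite ffunE. Qed.

(* Under a constant colouring every edge meeting S is monochromatic, so
   double counting the edges at the vertices of S gives sum deg <= 2 mu. *)
Lemma sum_deg_le_mu_const : (\sum_(v in S) deg e v <= 2 * mu e Xk S Xk)%N.
Proof.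
pose M := [set A in edgeset e | [exists u, exists v,
  [&& A == [set u; v], e u v, recolour Xk Xk S u == recolour Xk Xk S v
    & (u \in S) || (v \in S)]]].
have -> : mu e Xk S Xk = #|M| by [].
have colour_k z : recolour Xk Xk S z = k by rewrite ffunE Xk_const if_same.
have edges_atM v : v \in S -> edges_at v \subset [set A in M | v \in A].
  move=> vS; apply/subsetP => A /imsetP[u]; rewrite inE => evu ->.
  rewrite !inE eqxx /= andbT.
  by apply/andP; split; apply/existsP; exists v; apply/existsP; exists u;
     rewrite eqxx evu ?colour_k ?eqxx ?vS.
have edge_le2 A : A \in M -> (#|A| <= 2)%N.
  rewrite inE => /andP[/[!inE] /existsP[u /existsP[v /andP[/eqP-> _]]] _].
  by rewrite cards2; case: (_ != _).
apply: (@leq_trans (\sum_(v in S) #|[set A in M | v \in A]|)).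
  by apply: leq_sum => v vS; rewrite -card_edges_at subset_leq_card ?edges_atM.
apply: leq_trans (sum_incidences_le _ _) _.
by rewrite mulnC -sum_nat_const; apply: leq_sum => A /edge_le2.
Qed.

(* A constant colouring has at most one free colour, and none if S has a
   neighbour outside S; so f < |S| when S contains a non-isolated vertex. *)
Lemma nfree_const_lt (v u : V) : v \in S -> e v u -> (nfree e Xk S Xk < #|S|)%N.
Proof.
move=> vS evu.
have [uS | uNS] := boolP (u \in S).
  have nfree_le1 : (nfree e Xk S Xk <= 1)%N.
    rewrite -(cards1 k); apply: subset_leq_card; apply/subsetP => k'.
    by rewrite !inE => /andP[/existsP[w /andP[_ /eqP <-]] _]; rewrite Xk_const.
  apply: leq_ltn_trans nfree_le1 _.
  have <- : #|[set v; u]| = 2 by rewrite cards2; case: eqP => // vu; rewrite vu e_irr in evu.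
  by apply: subset_leq_card; apply/subsetP => x; rewrite !inE => /orP[] /eqP->.
have -> : nfree e Xk S Xk = 0%N.
  apply/eqP; rewrite cards_eq0; apply/eqP/setP => k'; rewrite !inE.
  apply/negbTE/negP => /andP[/existsP[w /andP[_ /eqP <-]] /negP]; apply.
  apply/existsP; exists u; rewrite !Xk_const eqxx andbT inE uNS /=.
  by apply/existsP; exists v; rewrite vS.
by rewrite card_gt0; apply/set0Pn; exists v.
Qed.

End ConstantColouring.

End BoundedDegree.

Section MuPlusBounds.
Variables (V : finType) (e : rel V) (q : nat) (Ssys : {set {set V}}).

Lemma muplus_le (b : nat) :
  (forall S (X c : {ffun V -> 'I_q}), (nfree e X S c < #|S|)%N ->
     (mu e X S c <= b * (#|S| - nfree e X S c))%N) ->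
  (muplus e q Ssys <= b%:R)%R.
Proof.
move=> mu_le; have b_ge0 : (0 <= b%:R :> rat)%R by rewrite ler0n.
apply: bigmax_le => // S _; apply: bigmax_le => // X _; apply: bigmax_le => // f _.
apply: bigmax_le => // c /eqP cf.
have f_lt : (nfree e X S c < #|S|)%N by rewrite cf ltn_ord.
rewrite ler_pdivrMr ?ltr0n ?subn_gt0 // -natrM ler_nat -cf.
exact: mu_le.
Qed.

Lemma muplus_ge (S : {set V}) (X c : {ffun V -> 'I_q}) :
  S \in Ssys -> forall f_lt : (nfree e X S c < #|S|)%N,
  ((mu e X S c)%:R / (#|S| - nfree e X S c)%N%:R <= muplus e q Ssys)%R.
Proof.
move=> SSsys f_lt; apply: le_trans (le_bigmax_cond _ _ SSsys).
apply: le_trans (le_bigmax_cond _ _ (isT : predT X)).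
apply: le_trans (le_bigmax_cond _ _ (isT : predT (Ordinal f_lt))).
exact: (le_bigmax_cond _ _ (eqxx (nfree e X S c))).
Qed.

End MuPlusBounds.

Theorem proposition2p4 (V : finType) (e : rel V) (q : nat) (Ssys : {set {set V}}) :
  symmetric e -> irreflexive e -> (0 < q)%N -> block_system Ssys ->
  (muplus e q Ssys <= (maxdeg e)%:R)%R /\
  ((forall v : V, deg e v = maxdeg e) ->
     ((maxdeg e)%:R / 2%:R <= muplus e q Ssys)%R).
Proof.
move=> e_sym e_irr q_gt0 cover_V; split.
  by apply: muplus_le => S X c _; apply: mu_le_maxdeg.
move=> regular; have [->|maxdeg_gt0] := posnP (maxdeg e).
  by rewrite mul0r; apply: bigmax_ge_id.
have [v0 _ | no_vertex] := pickP (fun _ : V => true); last first.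
  by move: maxdeg_gt0; rewrite /maxdeg (big_pred0 _ _ _ _ no_vertex).
have /bigcupP[S SSsys v0S] : v0 \in \bigcup_(S in Ssys) S by rewrite cover_V inE.
have /set0Pn[u /[!inE] ev0u] : [set u | e v0 u] != set0 by rewrite -card_gt0 -/(deg e v0) regular.
pose k : 'I_q := Ordinal q_gt0.
have f_lt := nfree_const_lt e_irr k v0S ev0u.
apply: le_trans (muplus_ge SSsys f_lt).
have double_count := sum_deg_le_mu_const e_irr k S.
rewrite (eq_bigr _ (fun v _ => regular v)) sum_nat_const mulnC in double_count.
rewrite ler_pdivlMr ?ltr0n ?subn_gt0 // mulrAC ler_pdivrMr ?ltr0n // -!natrM ler_nat.
rewrite [_ * 2]mulnC; apply: leq_trans double_count.
by rewrite leq_mul2l leq_subr orbT.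
Qed.
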